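(* Let $(\alpha_j)_{j\in\mathbb N}$, $(\beta_j)_{j\in\mathbb N}$, $(\sigma_j)_{j\in\mathbb N}$ be real sequences with $$\alpha_j\ge 0,\qquad 1\ge\beta_1\ge\beta_2\ge\cdots>0,\qquad 1<\sigma_1\le\sigma_2\le\cdots,$$ and suppose there is a constant $c>0$ with $0\le\alpha_j\le c\beta_j$ for all $j\in\mathbb N$. Let $\mathcal B=\{\mathcal B_d\}_{d\in\mathbb N}$ be the associated sequence of additive random fields with Korobov-kernel marginals (see context). Then $\mathcal B$ is strongly polynomially tractable for the normalized error criterion (NOR) if and only if $$A_*:=\liminf_{d\to\infty}\frac{\ln(1/\beta_d)}{\ln d}>1,$$ and in that case the exponent of strong polynomial tractability (for NOR) is $$p^{\rm str-avg}=\max\Big\{\frac{2}{A_*-1},\frac{2}{\sigma_1-1}\Big\}.$$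
   Context: For $\alpha\ge0$, $\beta>0$, $\sigma>1$, let $B_{\alpha,\beta,\sigma}(x)$, $x\in[0,1]$, be a zero-mean random process with covariance function $\kappa_{\alpha,\beta,\sigma}(x,y)=\alpha+2\beta\sum_{k=1}^\infty k^{-\sigma}\cos(2\pi k(x-y))$. Let $B_j$, $j\in\mathbb N$, be independent zero-mean random processes on $[0,1]$ with covariance functions $\kappa_{\alpha_j,\beta_j,\sigma_j}$, and for $d\in\mathbb N$ let $\mathcal B_d(\mathbf x)=\sum_{j=1}^d B_j(x_j)$, $\mathbf x\in[0,1]^d$, a zero-mean random field with covariance $\kappa^{\mathcal B_d}(\mathbf x,\mathbf y)=\sum_{j=1}^d\kappa_{\alpha_j,\beta_j,\sigma_j}(x_j,y_j)$, viewed as a random element of $L_2([0,1]^d)$. The $n$th minimal average case error is $e^{\mathcal B_d}(n)=\inf\{(\mathbb E\|\mathcal B_d-\sum_{m=1}^n(\mathcal B_d,\varphi_m)_{2,d}\psi_m\|_{2,d}^2)^{1/2}:\varphi_m,\psi_m\in L_2([0,1]^d)\}$ and $e^{\mathcal B_d}(0)=(\mathbb E\|\mathcal B_d\|_{2,d}^2)^{1/2}$. (Equivalently, if $\lambda_{d,1}\ge\lambda_{d,2}\ge\cdots$ are the eigenvalues of the covariance operator of $\mathcal B_d$ on $L_2([0,1]^d)$, namely $\sum_{j=1}^d\alpha_j$ together with the numbers $\beta_j k^{-\sigma_j}$, $k\in\mathbb N$, $j=1,\dots,d$, each taken twice, then $e^{\mathcal B_d}(n)^2=\sum_{j>n}\lambda_{d,j}$.)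 For $\varepsilon\in(0,1)$, the NOR information complexity is $n^{\mathcal B_d,\mathrm{NOR}}(\varepsilon)=\min\{n\in\mathbb N: e^{\mathcal B_d}(n)\le\varepsilon\, e^{\mathcal B_d}(0)\}$. The problem is strongly polynomially tractable (SPT) for NOR if there are $C,p\ge0$ with $n^{\mathcal B_d,\mathrm{NOR}}(\varepsilon)\le C\varepsilon^{-p}$ for all $d\in\mathbb N$, $\varepsilon\in(0,1)$; the exponent $p^{\rm str-avg}$ is the infimum of such $p$. Convention: $2/(A_*-1)=0$ if $A_*=\infty$. *)

From Stdlib Require Import Reals List.
From Coquelicot Require Import Coquelicot.
Open Scope R_scope.

(* Sequences are indexed from 1 (value at index 0 is irrelevant). *)

Fixpoint sumj (f : nat -> R) (d : nat) : R :=
  match d with O => 0 | S d' => sumj f d' + f (S d') end.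

(* Indices of eigenvalues of the covariance operator of B_d:
   None               <-> the eigenvalue  sum_{j=1}^d alpha_j
   Some (j, k, copy)  <-> beta_j k^{-sigma_j}, j in 1..d, k >= 1, copy in {two copies} *)
Definition eig_idx := option (nat * nat * bool).

Definition valid_idx (d : nat) (i : eig_idx) : Prop :=
  match i with
  | None => True
  | Some (j, k, _) => (1 <= j <= d)%nat /\ (1 <= k)%nat
  end.

Definition eig (alpha beta sigma : nat -> R) (d : nat) (i : eig_idx) : R :=
  match i with
  | None => sumj alpha d
  | Some (j, k, _) => beta j * Rpower (INR k) (- sigma j)
  end.

(* e(0)^2 = E ||B_d||^2 = trace = sum of all eigenvalues *)
Definition total (alpha beta sigma : nat -> R) (d : nat) : R :=
  sumj alpha d
  + 2 * sumj (fun j => beta j * Series (fun k => Rpower (INR (S k)) (- sigma j))) d.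

Definition subset_sum (alpha beta sigma : nat -> R) (d : nat) (S : list eig_idx) : R :=
  fold_right (fun i acc => eig alpha beta sigma d i + acc) 0 S.

(* sum of the n largest eigenvalues (with multiplicity) = sup over sets of at most
   n distinct eigenvalue indices of the sum of the corresponding eigenvalues *)
Definition top_sum (alpha beta sigma : nat -> R) (d n : nat) : R :=
  real (Lub_Rbar (fun x => exists S : list eig_idx,
     NoDup S /\ List.Forall (valid_idx d) S /\ (length S <= n)%nat /\
     x = subset_sum alpha beta sigma d S)).

(* e^{B_d}(n)^2 = sum_{j>n} lambda_{d,j} *)
Definition err2 (alpha beta sigma : nat -> R) (d n : nat) : R :=
  total alpha beta sigma d - top_sum alpha beta sigma d n.

Definition err (alpha beta sigma : nat -> R) (d n : nat) : R :=
  sqrt (err2 alpha beta sigma d n).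

Definition is_nNOR (alpha beta sigma : nat -> R) (d : nat) (eps : R) (n : nat) : Prop :=
  err alpha beta sigma d n <= eps * err alpha beta sigma d 0 /\
  forall m, (m < n)%nat -> ~ (err alpha beta sigma d m <= eps * err alpha beta sigma d 0).

Definition SPT_with (alpha beta sigma : nat -> R) (p : R) : Prop :=
  0 <= p /\ exists C : R, 0 <= C /\
    forall (d : nat) (eps : R), (1 <= d)%nat -> 0 < eps < 1 ->
      exists n : nat, is_nNOR alpha beta sigma d eps n /\ INR n <= C * Rpower eps (- p).

Definition SPT (alpha beta sigma : nat -> R) : Prop :=
  exists p, SPT_with alpha beta sigma p.

Definition is_inf (P : R -> Prop) (x : R) : Prop :=
  (forall p, P p -> x <= p) /\ (forall y, (forall p, P p -> y <= p) -> y <= x).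

Definition Astar (beta : nat -> R) : Rbar :=
  LimInf_seq (fun d => ln (1 / beta d) / ln (INR d)).

(* 2/(A_*-1), with the convention 2/(A_*-1) = 0 if A_* = +oo *)
Definition two_over_Am1 (A : Rbar) : R :=
  match A with
  | Finite a => 2 / (a - 1)
  | _ => 0
  end.

From Stdlib Require Import Reals List Lra Lia Classical Wf_nat.
From Coquelicot Require Import Coquelicot.
Open Scope R_scope.

(* In dimension 1, n eigenvalues leave at least n of the 2n values
   beta_1 k^(-sigma_1), k <= n, uncovered, so beta_1 n^(1-sigma_1) <= eps^2 e(0)^2; with
   n <= C eps^(-p) this forces p (sigma_1 - 1) >= 2.  At a fixed accuracy the bound on n makes
   sum_j beta_j, hence e(0)^2, bounded in d.  Taking eps = (C/d)^(1/p), so that n <= d, at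
   least d of the 2d values beta_j (k = 1), each >= beta_d, are missed:
   d beta_d <= eps^2 sup_d e(0)^2, so beta_d = O(d^(-1-2/p)) and A_* >= 1 + 2/p.

   For r = p/(p+2), M := sup_d 2 sum_j beta_j^r zeta(r sigma_j), the supremum of
   the sums of lambda^r over the eigenvalues beta_j k^(-sigma_j), is finite when
   r sigma_1 > 1 and r A_* > 1.  Keeping the eigenvalue sum_j alpha_j and every
   beta_j k^(-sigma_j) >= t uses at most 1 + t^(-r) M eigenvalues and leaves an error at most
   t^(1-r) M; choosing t^(1-r) M = 2 beta_1 eps^2 <= eps^2 e(0)^2 gives
   n = O(eps^(-2r/(1-r))) = O(eps^(-p)). *)

Lemma exp_le_compat x y : x <= y -> exp x <= exp y.
Proof. intros [H|H]; [left; apply exp_increasing; auto | subst; lra]. Qed.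

Lemma ln_le_sub_1 x : 0 < x -> ln x <= x - 1.
Proof.
  intros Hx. rewrite <- (ln_exp (x - 1)). apply ln_le; auto.
  generalize (exp_ineq1_le (x - 1)); lra.
Qed.

Lemma ln_INR_nonneg k : (1 <= k)%nat -> 0 <= ln (INR k).
Proof. intros Hk. rewrite <- ln_1. apply ln_le; [lra|]. apply (le_INR 1); auto. Qed.

Lemma Rpower_pos x y : 0 < Rpower x y.
Proof. apply exp_pos. Qed.

Lemma Rpower_1_l y : Rpower 1 y = 1.
Proof. unfold Rpower; rewrite ln_1, Rmult_0_r, exp_0; auto. Qed.

Lemma Rpower_le_1_nonpos x y : 1 <= x -> y <= 0 -> Rpower x y <= 1.
Proof. intros Hx Hy. rewrite <- (Rpower_O x) by lra. apply Rle_Rpower; lra. Qed.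

Lemma Rpower_le_1_nonneg x y : 0 < x <= 1 -> 0 <= y -> Rpower x y <= 1.
Proof. intros Hx Hy. rewrite <- (Rpower_1_l y). apply Rle_Rpower_l; lra. Qed.

Lemma Rpower_le_compat_nonpos x y e : 0 < x <= y -> e <= 0 -> Rpower y e <= Rpower x e.
Proof.
  intros Hxy He. replace e with (- - e) by ring. rewrite (Rpower_Ropp y), (Rpower_Ropp x).
  apply Rinv_le_contravar; [apply Rpower_pos|]. apply Rle_Rpower_l; lra.
Qed.

Lemma Rpower_ge_threshold t x r : 0 < t <= x -> 0 <= r -> 1 <= Rpower t (- r) * Rpower x r.
Proof.
  intros Htx Hr. unfold Rpower. rewrite <- exp_plus, <- exp_0. apply exp_le_compat.
  assert (ln t <= ln x) by (apply ln_le; lra). nra.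
Qed.

Lemma Rpower_le_threshold t x r : 0 < x <= t -> r <= 1 -> x <= Rpower t (1 - r) * Rpower x r.
Proof.
  intros Hxt Hr. unfold Rpower. rewrite <- exp_plus, <- (exp_ln x) at 1 by lra.
  apply exp_le_compat. assert (ln x <= ln t) by (apply ln_le; lra). nra.
Qed.

Lemma Rpower_exponent_le_of_bound a L g1 g2 : 0 < a ->
  (forall eps, 0 < eps < 1 -> a * Rpower eps g1 <= L * Rpower eps g2) -> g2 <= g1.
Proof.
  intros Ha Hb. destruct (Rle_or_lt g2 g1) as [|Hg]; auto. exfalso.
  assert (HL : 0 < L).
  { specialize (Hb (/ 2) ltac:(lra)).
    generalize (Rpower_pos (/ 2) g1) (Rpower_pos (/ 2) g2); nra. }
  set (Y := Rmax 1 ((ln L - ln a + 1) / (g2 - g1))).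
  assert (HY : (ln L - ln a + 1) / (g2 - g1) <= Y) by apply Rmax_r.
  assert (Heps : 0 < exp (- Y) < 1).
  { split; [apply exp_pos|]. rewrite <- exp_0. apply exp_increasing.
    generalize (Rmax_l 1 ((ln L - ln a + 1) / (g2 - g1))); fold Y; lra. }
  specialize (Hb _ Heps). apply ln_le in Hb; [|apply Rmult_lt_0_compat; auto; apply Rpower_pos].
  rewrite !ln_mult, !ln_Rpower, !ln_exp in Hb by (auto; apply Rpower_pos).
  apply (Rmult_le_compat_l (g2 - g1)) in HY; [|lra].
  replace ((g2 - g1) * ((ln L - ln a + 1) / (g2 - g1))) with (ln L - ln a + 1) in HY
    by (field; lra).
  lra.
Qed.

Lemma least_nat_witness (P : nat -> Prop) n : P n ->
  exists m, (m <= n)%nat /\ P m /\ forall k, (k < m)%nat -> ~ P k.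
Proof.
  intros Hn.
  destruct (dec_inh_nat_subset_has_unique_least_element P (fun k => classic (P k)) (ex_intro _ n Hn))
    as [m [[Pm Hmin] _]].
  exists m. split; [apply Hmin; auto|]. split; auto.
  intros k Hk Pk. specialize (Hmin k Pk). lia.
Qed.

Lemma sumj_ext f g d : (forall j, (1 <= j <= d)%nat -> f j = g j) -> sumj f d = sumj g d.
Proof.
  induction d; simpl; intros H; auto.
  rewrite IHd by (intros; apply H; lia). rewrite H by lia; auto.
Qed.

Lemma sumj_le f g d : (forall j, (1 <= j <= d)%nat -> f j <= g j) -> sumj f d <= sumj g d.
Proof.
  induction d; simpl; intros H; [lra|].
  assert (sumj f d <= sumj g d) by (apply IHd; intros; apply H; lia).
  assert (f (S d) <= g (S d)) by (apply H; lia). lra.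
Qed.

Lemma sumj_0 d : sumj (fun _ => 0) d = 0.
Proof. induction d; simpl; [|rewrite IHd]; lra. Qed.

Lemma sumj_nonneg f d : (forall j, (1 <= j <= d)%nat -> 0 <= f j) -> 0 <= sumj f d.
Proof. intros H. rewrite <- (sumj_0 d). apply sumj_le; auto. Qed.

Lemma sumj_mult_l a f d : sumj (fun j => a * f j) d = a * sumj f d.
Proof. induction d; simpl; [|rewrite IHd]; ring. Qed.

Lemma sumj_plus f g d : sumj (fun j => f j + g j) d = sumj f d + sumj g d.
Proof. induction d; simpl; [|rewrite IHd]; ring. Qed.

Lemma sumj_sum_n f N : sumj f (S N) = sum_n (fun k => f (S k)) N.
Proof.
  induction N.
  - rewrite sum_O. simpl. lra.
  - rewrite sum_Sn, <- IHN. reflexivity.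
Qed.

Lemma sumj_le_prefix g h N d :
  (forall j, (1 <= j)%nat -> 0 <= g j <= 1) -> (forall j, (N < j)%nat -> g j <= h j) ->
  (forall j, 0 <= h j) -> sumj g d <= INR N + sumj h d.
Proof.
  intros Hg Hgh Hh.
  enough (forall d, sumj g d <= INR (Nat.min d N) + sumj h d) as H.
  { specialize (H d). assert (INR (Nat.min d N) <= INR N) by (apply le_INR; lia). lra. }
  clear d. induction d as [|d IH]; cbn [sumj]; [simpl; lra|].
  destruct (Compare_dec.le_lt_dec (S d) N) as [HdN|HdN].
  - rewrite Nat.min_l by lia. rewrite Nat.min_l in IH by lia. rewrite S_INR.
    specialize (Hg (S d) ltac:(lia)). specialize (Hh (S d)). lra.
  - rewrite Nat.min_r by lia. rewrite Nat.min_r in IH by lia.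
    specialize (Hgh (S d) HdN). lra.
Qed.

Lemma sum_n_nonneg (a : nat -> R) n : (forall n, 0 <= a n) -> 0 <= sum_n a n.
Proof.
  intros Ha. induction n; [rewrite sum_O; auto|].
  rewrite sum_Sn. specialize (Ha (S n)). unfold plus; simpl; lra.
Qed.

Lemma sum_n_Rmult_l (a : R) (u : nat -> R) n : sum_n (fun k => a * u k) n = a * sum_n u n.
Proof. exact (sum_n_mult_l a u n). Qed.

Lemma Series_bounded_nonneg (a : nat -> R) M : (forall n, 0 <= a n) ->
  (forall n, sum_n a n <= M) -> ex_series a /\ Series a <= M.
Proof.
  intros Ha HM.
  assert (Hinc : forall n, sum_n a n <= sum_n a (S n)).
  { intros n. rewrite sum_Sn. specialize (Ha (S n)). unfold plus; simpl; lra. }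
  destruct (ex_finite_lim_seq_incr _ M Hinc HM) as [l Hl].
  split; [exists l; exact Hl|].
  rewrite (is_series_unique a l Hl).
  exact (is_lim_seq_le (sum_n a) (fun _ => M) l M HM Hl (is_lim_seq_const M)).
Qed.

Lemma Series_nonneg (a : nat -> R) : (forall n, 0 <= a n) -> ex_series a -> 0 <= Series a.
Proof.
  intros Ha Hex.
  exact (is_lim_seq_le (fun _ => 0) (sum_n a) 0 (Series a) (fun n => sum_n_nonneg a n Ha)
           (is_lim_seq_const 0) (Series_correct a Hex)).
Qed.

Lemma sum_n_le_Series (a : nat -> R) n : (forall n, 0 <= a n) -> ex_series a ->
  sum_n a n <= Series a.
Proof.
  intros Ha Hex. rewrite (Series_incr_n a (S n)), sum_n_Reals by (auto; lia).
  assert (0 <= Series (fun k => a (S n + k)%nat)).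
  { apply Series_nonneg; auto. apply ex_series_incr_n; auto. }
  simpl pred. lra.
Qed.

Lemma Series_tail_le (a b : nat -> R) K : (0 < K)%nat -> (forall n, 0 <= a n) -> ex_series b ->
  (forall k, (K <= k)%nat -> a k <= b k) ->
  Series a - sum_n a (pred K) <= Series b - sum_n b (pred K).
Proof.
  intros HK Ha Hb Hab.
  assert (Hta : ex_series (fun k => a (K + k)%nat)).
  { apply (@ex_series_le R_AbsRing R_CompleteNormedModule _ (fun k => b (K + k)%nat)).
    - intros n. change (norm (a (K + n)%nat)) with (Rabs (a (K + n)%nat)).
      rewrite Rabs_pos_eq by auto. apply Hab; lia.
    - apply ex_series_incr_n; auto. }
  rewrite (Series_incr_n a K), (Series_incr_n b K), !sum_n_Reals
    by (auto; apply (ex_series_incr_n a K); auto).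
  assert (Series (fun k => a (K + k)%nat) <= Series (fun k => b (K + k)%nat)).
  { apply Series_le; [intros; split; auto; apply Hab; lia | apply ex_series_incr_n; auto]. }
  lra.
Qed.

Definition zeta_term (s : R) (k : nat) : R := Rpower (INR (S k)) (- s).

Definition zeta (s : R) : R := Series (zeta_term s).

Definition zeta_partial (s : R) (K : nat) : R := sumj (fun k => Rpower (INR k) (- s)) K.

Lemma zeta_term_pos s k : 0 < zeta_term s k.
Proof. apply Rpower_pos. Qed.

Lemma sum_n_zeta_term s n : sum_n (zeta_term s) n = zeta_partial s (S n).
Proof. unfold zeta_partial. rewrite sumj_sum_n. reflexivity. Qed.

(* Telescoping substitute for the integral test: k^{-s} <= ((k-1)^{1-s} - k^{1-s}) / (s-1). *)
Lemma Rpower_telescope s k : 1 < s -> 2 <= k ->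
  (s - 1) * Rpower k (- s) + Rpower k (1 - s) <= Rpower (k - 1) (1 - s).
Proof.
  intros Hs Hk.
  assert (E1 : Rpower k (1 - s) = k * Rpower k (- s)).
  { replace (1 - s) with (1 + - s) by ring. rewrite Rpower_plus, Rpower_1 by lra. auto. }
  assert (Hl : 1 / k <= ln k - ln (k - 1)).
  { assert (H := ln_le_sub_1 ((k - 1) / k)).
    assert (ln ((k - 1) / k) = ln (k - 1) - ln k).
    { unfold Rdiv. rewrite ln_mult, ln_Rinv by (try apply Rinv_0_lt_compat; lra). ring. }
    assert ((k - 1) / k - 1 = - (1 / k)) by (field; lra).
    assert (0 < (k - 1) / k) by (apply Rdiv_lt_0_compat; lra). lra. }
  assert (E2 : Rpower (k - 1) (1 - s) = Rpower k (1 - s) * exp ((s - 1) * (ln k - ln (k - 1)))).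
  { unfold Rpower. rewrite <- exp_plus. f_equal. ring. }
  rewrite E2, E1.
  assert (H3 := exp_ineq1_le ((s - 1) * (ln k - ln (k - 1)))).
  assert (0 < Rpower k (- s)) by apply Rpower_pos.
  assert ((s - 1) * (1 / k) <= (s - 1) * (ln k - ln (k - 1))) by (apply Rmult_le_compat_l; lra).
  assert (k * Rpower k (- s) * (1 + (s - 1) * (1 / k))
          = (s - 1) * Rpower k (- s) + k * Rpower k (- s)) by (field; lra).
  assert (0 < k * Rpower k (- s)) by (apply Rmult_lt_0_compat; lra).
  nra.
Qed.

Lemma zeta_partial_le s N : 1 < s -> zeta_partial s N <= s / (s - 1).
Proof.
  intros Hs. unfold zeta_partial.
  enough (forall N, (1 <= N)%nat ->
    sumj (fun k => Rpower (INR k) (- s)) N + Rpower (INR N) (1 - s) / (s - 1) <= 1 + 1 / (s - 1))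
    as H.
  { replace (s / (s - 1)) with (1 + 1 / (s - 1)) by (field; lra).
    destruct N as [|N]; [simpl; apply Rlt_le, Rplus_lt_0_compat, Rdiv_lt_0_compat; lra|].
    specialize (H (S N) ltac:(lia)).
    assert (0 < Rpower (INR (S N)) (1 - s) / (s - 1)) by (apply Rdiv_lt_0_compat; [apply Rpower_pos|lra]).
    lra. }
  clear N. intros N HN. induction HN as [|m HN IH].
  - simpl. rewrite !Rpower_1_l. lra.
  - cbn [sumj].
    assert (H2 : 2 <= INR (S m)) by (rewrite S_INR; apply (le_INR 1) in HN; simpl in HN; lra).
    assert (H := Rpower_telescope s (INR (S m)) Hs H2).
    replace (INR (S m) - 1) with (INR m) in H by (rewrite S_INR; ring).
    assert (Rpower (INR (S m)) (- s) + Rpower (INR (S m)) (1 - s) / (s - 1)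
            <= Rpower (INR m) (1 - s) / (s - 1)).
    { apply (Rmult_le_reg_l (s - 1)); [lra|].
      replace ((s - 1) * (Rpower (INR (S m)) (- s) + Rpower (INR (S m)) (1 - s) / (s - 1)))
        with ((s - 1) * Rpower (INR (S m)) (- s) + Rpower (INR (S m)) (1 - s)) by (field; lra).
      replace ((s - 1) * (Rpower (INR m) (1 - s) / (s - 1))) with (Rpower (INR m) (1 - s))
        by (field; lra).
      auto. }
    lra.
Qed.

Lemma zeta_converges s : 1 < s -> ex_series (zeta_term s) /\ zeta s <= s / (s - 1).
Proof.
  intros Hs. apply Series_bounded_nonneg; [intros; apply Rlt_le, zeta_term_pos|].
  intros n. rewrite sum_n_zeta_term. apply zeta_partial_le; auto.
Qed.

Lemma zeta_partial_le_zeta s K : 1 < s -> zeta_partial s K <= zeta s.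
Proof.
  intros Hs. destruct (zeta_converges s Hs) as [Hex _].
  assert (Hpos : forall k, 0 <= zeta_term s k) by (intros; apply Rlt_le, zeta_term_pos).
  destruct K as [|K].
  - apply Series_nonneg; auto.
  - rewrite <- sum_n_zeta_term. apply sum_n_le_Series; auto.
Qed.

Lemma zeta_ge_1 s : 1 < s -> 1 <= zeta s.
Proof.
  intros Hs. assert (H := zeta_partial_le_zeta s 1 Hs).
  unfold zeta_partial in H. simpl in H. rewrite Rpower_1_l in H. lra.
Qed.

Lemma zeta_antitone s s' : 1 < s -> s <= s' -> zeta s' <= zeta s.
Proof.
  intros Hs Hss. apply Series_le; [|apply zeta_converges; auto].
  intros n. split; [apply Rlt_le, zeta_term_pos|].
  apply Rle_Rpower; [|lra]. rewrite S_INR. generalize (pos_INR n). lra.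
Qed.

Definition Rle_b (x y : R) : bool := if Rle_dec x y then true else false.

Lemma Rle_b_spec x y : Rle_b x y = true <-> x <= y.
Proof. unfold Rle_b. destruct (Rle_dec x y); split; auto; discriminate. Qed.

Section ListSums.

Context {A : Type}.

Definition lsum (f : A -> R) (l : list A) : R := fold_right (fun x acc => f x + acc) 0 l.

Lemma lsum_app f l1 l2 : lsum f (l1 ++ l2) = lsum f l1 + lsum f l2.
Proof. induction l1; simpl; [|rewrite IHl1]; ring. Qed.

Lemma lsum_mult_l f a l : lsum (fun x => a * f x) l = a * lsum f l.
Proof. induction l; simpl; [|rewrite IHl]; ring. Qed.

Lemma lsum_le f g l : (forall x, In x l -> f x <= g x) -> lsum f l <= lsum g l.
Proof.
  induction l as [|x l IH]; simpl; intros H; [lra|].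
  assert (f x <= g x) by auto. assert (lsum f l <= lsum g l) by auto. lra.
Qed.

Lemma lsum_const m l : lsum (fun _ => m) l = INR (length l) * m.
Proof. induction l as [|x l IH]; simpl lsum; simpl length; [simpl|rewrite IH, S_INR]; ring. Qed.

Lemma lsum_ge_length f l m : (forall x, In x l -> m <= f x) -> INR (length l) * m <= lsum f l.
Proof. intros H. rewrite <- lsum_const. apply lsum_le; auto. Qed.

Lemma lsum_le_length f l m : (forall x, In x l -> f x <= m) -> lsum f l <= INR (length l) * m.
Proof. intros H. rewrite <- lsum_const. apply lsum_le; auto. Qed.

Lemma lsum_nonneg f l : (forall x, In x l -> 0 <= f x) -> 0 <= lsum f l.
Proof. intros H. generalize (lsum_ge_length f l 0 H). lra. Qed.

Lemma lsum_filter f (P : A -> bool) l :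
  lsum f l = lsum f (filter P l) + lsum f (filter (fun x => negb (P x)) l).
Proof. induction l as [|x l IH]; simpl; [|destruct (P x); simpl; rewrite IH]; ring. Qed.

Lemma lsum_incl f S L : NoDup S -> incl S L -> (forall x, In x L -> 0 <= f x) ->
  lsum f S <= lsum f L.
Proof.
  revert L. induction S as [|x S IH]; intros L HN Hi Hf; [apply lsum_nonneg; auto|].
  inversion HN as [|? ? HxS HNS]; subst.
  destruct (in_split x L (Hi x (or_introl eq_refl))) as [L1 [L2 ->]].
  assert (lsum f S <= lsum f (L1 ++ L2)).
  { apply IH; auto.
    - intros y Hy. assert (Hy' := Hi y (or_intror Hy)).
      apply in_app_iff in Hy'. apply in_app_iff. destruct Hy' as [|[->|]]; tauto.
    - intros y Hy. apply Hf. apply in_app_iff in Hy. apply in_app_iff. simpl. tauto. }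
  rewrite lsum_app in *. simpl. lra.
Qed.

Lemma length_filter_ge t r f l : 0 < t -> 0 <= r ->
  INR (length (filter (fun x => Rle_b t (f x)) l))
  <= Rpower t (- r) * lsum (fun x => Rpower (f x) r) (filter (fun x => Rle_b t (f x)) l).
Proof.
  intros Ht Hr. rewrite <- lsum_mult_l, <- (Rmult_1_r (INR _)). apply lsum_ge_length.
  intros x Hx. apply filter_In in Hx. destruct Hx as [_ Hx]. apply Rle_b_spec in Hx.
  apply Rpower_ge_threshold; lra.
Qed.

Lemma lsum_filter_lt t r f l : r <= 1 -> (forall x, In x l -> 0 < f x) ->
  lsum f (filter (fun x => negb (Rle_b t (f x))) l)
  <= Rpower t (1 - r) * lsum (fun x => Rpower (f x) r) (filter (fun x => negb (Rle_b t (f x))) l).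
Proof.
  intros Hr Hf. rewrite <- lsum_mult_l. apply lsum_le.
  intros x Hx. apply filter_In in Hx. destruct Hx as [Hx Hxt].
  destruct (Rle_b t (f x)) eqn:E; [discriminate|].
  assert (~ t <= f x) by (rewrite <- Rle_b_spec; congruence).
  apply Rpower_le_threshold; [split; auto|]; lra.
Qed.

End ListSums.

Definition eig_idx_eq_dec : forall x y : eig_idx, {x = y} + {x <> y}.
Proof. repeat decide equality. Defined.

Fixpoint box_row (j K : nat) : list eig_idx :=
  match K with
  | O => nil
  | S K' => box_row j K' ++ (Some (j, S K', false) :: Some (j, S K', true) :: nil)
  end.

Fixpoint box (d K : nat) : list eig_idx :=
  match d with
  | O => nil
  | S d' => box d' K ++ box_row (S d') K
  end.

Lemma In_box_row i j K : In i (box_row j K) <-> exists k b, i = Some (j, k, b) /\ (1 <= k <= K)%nat.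
Proof.
  induction K as [|K IH]; simpl.
  - split; [tauto | intros [k [b [_ H]]]; lia].
  - rewrite in_app_iff, IH. simpl. split.
    + intros [[k [b [E H]]]|[E|[E|[]]]].
      * exists k, b; split; auto; lia.
      * exists (S K), false; split; auto; lia.
      * exists (S K), true; split; auto; lia.
    + intros [k [b [E H]]]. destruct (Nat.eq_dec k (S K)) as [->|].
      * destruct b; auto.
      * left. exists k, b; split; auto; lia.
Qed.

Lemma In_box i d K : In i (box d K) <->
  exists j k b, i = Some (j, k, b) /\ (1 <= j <= d)%nat /\ (1 <= k <= K)%nat.
Proof.
  induction d as [|d IH]; simpl.
  - split; [tauto | intros [j [k [b [_ [H _]]]]]; lia].
  - rewrite in_app_iff, IH, In_box_row. split.
    + intros [[j [k [b [E [H1 H2]]]]]|[k [b [E H]]]].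
      * exists j, k, b; repeat split; auto; lia.
      * exists (S d), k, b; repeat split; auto; lia.
    + intros [j [k [b [E [H1 H2]]]]]. destruct (Nat.eq_dec j (S d)) as [->|].
      * right. exists k, b; auto.
      * left. exists j, k, b; repeat split; auto; lia.
Qed.

Lemma NoDup_box_row j K : NoDup (box_row j K).
Proof.
  induction K as [|K IH]; simpl; [constructor|].
  apply NoDup_app; auto.
  - repeat constructor; simpl; intuition discriminate.
  - intros x Hx Hx'. apply In_box_row in Hx. destruct Hx as [k [b [-> H]]].
    simpl in Hx'. destruct Hx' as [E|[E|[]]]; inversion E; lia.
Qed.

Lemma NoDup_box d K : NoDup (box d K).
Proof.
  induction d as [|d IH]; simpl; [constructor|].
  apply NoDup_app; auto using NoDup_box_row.
  intros x Hx Hx'. apply In_box in Hx. apply In_box_row in Hx'.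
  destruct Hx as [j [k [b [-> [H1 H2]]]]]. destruct Hx' as [k' [b' [E H']]].
  inversion E. lia.
Qed.

Lemma length_box d K : length (box d K) = (2 * d * K)%nat.
Proof.
  assert (Hrow : forall j, length (box_row j K) = (2 * K)%nat).
  { intros j. induction K; simpl; auto. rewrite length_app, IHK. simpl. lia. }
  induction d; simpl; auto. rewrite length_app, IHd, Hrow. lia.
Qed.

Lemma lsum_box f d K : lsum f (box d K) =
  sumj (fun j => sumj (fun k => f (Some (j, k, false)) + f (Some (j, k, true))) K) d.
Proof.
  assert (Hrow : forall j,
    lsum f (box_row j K) = sumj (fun k => f (Some (j, k, false)) + f (Some (j, k, true))) K).
  { intros j. induction K; cbn [box_row sumj]; auto. rewrite lsum_app, IHK. simpl. ring. }
  induction d; cbn [box sumj]; auto. rewrite lsum_app, IHd, Hrow. reflexivity.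
Qed.

Lemma valid_box d K : List.Forall (valid_idx d) (box d K).
Proof.
  apply Forall_forall. intros x Hx. apply In_box in Hx.
  destruct Hx as [j [k [b [-> [H1 H2]]]]]. simpl. lia.
Qed.

Lemma LimInf_seq_ge (u : nat -> R) (A : R) :
  (forall e, 0 < e -> exists N, forall n, (N <= n)%nat -> A - e <= u n) ->
  Rbar_le A (LimInf_seq u).
Proof.
  intros H.
  assert (He : forall e, 0 < e -> Rbar_le (A - e) (LimInf_seq u)).
  { intros e He. rewrite <- LimInf_seq_const. apply LimInf_le, H; auto. }
  destruct (LimInf_seq u) as [l| |]; simpl in *; auto.
  - apply Rle_plus_epsilon. intros e He'. specialize (He e He'). lra.
  - exact (He 1 Rlt_0_1).
Qed.

Lemma LimInf_seq_gt (u : nat -> R) (A : R) :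
  Rbar_lt A (LimInf_seq u) -> exists N, forall n, (N <= n)%nat -> A < u n.
Proof.
  destruct (ex_LimInf_seq u) as [l Hl]. rewrite (is_LimInf_seq_unique _ _ Hl).
  intros HA. destruct l as [l| |]; simpl in HA; [| apply Hl | contradiction].
  assert (He : 0 < (l - A) / 2) by lra.
  destruct (Hl (mkposreal _ He)) as [_ [N HN]]. simpl in HN.
  exists N. intros n Hn. specialize (HN n Hn). lra.
Qed.

Lemma Rbar_lt_dense (x : R) (y : Rbar) : Rbar_lt x y -> exists z, x < z /\ Rbar_lt z y.
Proof.
  destruct y as [y| |]; simpl; intros H; [exists ((x + y) / 2) | exists (x + 1) | contradiction];
    simpl; split; lra || auto.
Qed.

Lemma two_over_Am1_le (A : Rbar) p : 0 < p -> Rbar_le (1 + 2 / p) A ->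
  Rbar_lt 1 A /\ two_over_Am1 A <= p.
Proof.
  intros Hp HA. assert (0 < 2 / p) by (apply Rdiv_lt_0_compat; lra).
  destruct A as [a| |]; simpl in *; [|split; auto; lra | contradiction].
  split; [lra|].
  apply (Rmult_le_reg_r (a - 1)); [lra|]. replace (2 / (a - 1) * (a - 1)) with 2 by (field; lra).
  apply (Rmult_le_compat_l p) in HA; [|lra]. replace (p * (1 + 2 / p)) with (p + 2) in HA by (field; lra).
  lra.
Qed.

Lemma two_over_Am1_lt (A : Rbar) p : 0 < p -> Rbar_lt 1 A -> two_over_Am1 A < p ->
  Rbar_lt (1 + 2 / p) A.
Proof.
  intros Hp HA1 HA. destruct A as [a| |]; simpl in *; auto.
  apply (Rmult_lt_compat_r (a - 1)) in HA; [|lra]. replace (2 / (a - 1) * (a - 1)) with 2 in HA by (field; lra).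
  apply (Rmult_lt_reg_l p); [lra|]. replace (p * (1 + 2 / p)) with (p + 2) by (field; lra). lra.
Qed.

Lemma Lub_Rbar_real_spec (E : R -> Prop) x0 M : E x0 -> (forall x, E x -> x <= M) ->
  (forall x, E x -> x <= real (Lub_Rbar E)) /\
  (forall M', (forall x, E x -> x <= M') -> real (Lub_Rbar E) <= M').
Proof.
  intros H0 HM. destruct (Lub_Rbar_correct E) as [Hub Hlub].
  assert (HlM := Hlub (Finite M) HM). assert (Hl0 := Hub x0 H0).
  destruct (Lub_Rbar E) as [l| |]; simpl in *; try contradiction.
  split; [intros x Hx; apply (Hub x Hx) | intros M' HM'; apply (Hlub (Finite M') HM')].
Qed.

Lemma is_nNOR_exists alpha beta sigma d eps n :
  err alpha beta sigma d n <= eps * err alpha beta sigma d 0 ->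
  exists m, (m <= n)%nat /\ is_nNOR alpha beta sigma d eps m.
Proof.
  intros Hn.
  destruct (least_nat_witness (fun m => err alpha beta sigma d m <= eps * err alpha beta sigma d 0) n Hn)
    as [m [Hm [Pm Hmin]]].
  exists m. split; auto. split; auto.
Qed.

Section Model.

Variables (alpha beta sigma : nat -> R) (c : R).
Hypothesis alpha_nonneg : forall j, (1 <= j)%nat -> 0 <= alpha j.
Hypothesis beta_1_le_1 : beta 1%nat <= 1.
Hypothesis beta_S_le : forall j, (1 <= j)%nat -> beta (S j) <= beta j.
Hypothesis beta_pos : forall j, (1 <= j)%nat -> 0 < beta j.
Hypothesis sigma_1_gt_1 : 1 < sigma 1%nat.
Hypothesis sigma_le_S : forall j, (1 <= j)%nat -> sigma j <= sigma (S j).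
Hypothesis c_pos : 0 < c.
Hypothesis alpha_le_c_beta : forall j, (1 <= j)%nat -> alpha j <= c * beta j.

Local Notation eigv := (eig alpha beta sigma).
Local Notation T := (total alpha beta sigma).
Local Notation top := (top_sum alpha beta sigma).
Local Notation e2 := (err2 alpha beta sigma).

Lemma beta_antitone i j : (1 <= i <= j)%nat -> beta j <= beta i.
Proof.
  intros [Hi Hij]. induction Hij; [lra|].
  assert (beta (S m) <= beta m) by (apply beta_S_le; lia). lra.
Qed.

Lemma beta_le_1 j : (1 <= j)%nat -> beta j <= 1.
Proof. intros Hj. assert (beta j <= beta 1%nat) by (apply beta_antitone; lia). lra. Qed.

Lemma sigma_monotone i j : (1 <= i <= j)%nat -> sigma i <= sigma j.
Proof.
  intros [Hi Hij]. induction Hij; [lra|].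
  assert (sigma m <= sigma (S m)) by (apply sigma_le_S; lia). lra.
Qed.

Lemma sigma_1_le j : (1 <= j)%nat -> sigma 1%nat <= sigma j.
Proof. intros Hj. apply sigma_monotone. lia. Qed.

Lemma sigma_gt_1 j : (1 <= j)%nat -> 1 < sigma j.
Proof. intros Hj. generalize (sigma_1_le j Hj). lra. Qed.

Lemma sum_alpha_nonneg d : 0 <= sumj alpha d.
Proof. apply sumj_nonneg. intros; apply alpha_nonneg; lia. Qed.

Lemma sum_alpha_le d : sumj alpha d <= c * sumj beta d.
Proof. rewrite <- sumj_mult_l. apply sumj_le. intros; apply alpha_le_c_beta; lia. Qed.

Lemma beta_1_le_sum_beta d : (1 <= d)%nat -> beta 1%nat <= sumj beta d.
Proof.
  intros Hd. induction Hd; simpl; [lra|].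
  assert (0 < beta (S m)) by (apply beta_pos; lia). lra.
Qed.

Lemma eig_nonneg d i : valid_idx d i -> 0 <= eigv d i.
Proof.
  destruct i as [[[j k] b]|]; simpl; intros Hv; [|apply sum_alpha_nonneg].
  apply Rmult_le_pos; [apply Rlt_le, beta_pos; lia | apply Rlt_le, Rpower_pos].
Qed.

Lemma eig_le_1 d j k b : valid_idx d (Some (j, k, b)) -> eigv d (Some (j, k, b)) <= 1.
Proof.
  simpl; intros Hv.
  assert (beta j <= 1) by (apply beta_le_1; lia).
  assert (0 < beta j) by (apply beta_pos; lia).
  assert (Rpower (INR k) (- sigma j) <= 1).
  { apply Rpower_le_1_nonpos; [apply (le_INR 1); lia | generalize (sigma_gt_1 j ltac:(lia)); lra]. }
  assert (0 < Rpower (INR k) (- sigma j)) by apply Rpower_pos. nra.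
Qed.

Lemma eig_box_ge d K x : In x (box d K) -> beta d * Rpower (INR K) (- sigma d) <= eigv d x.
Proof.
  intros Hx. apply In_box in Hx. destruct Hx as [j [k [b [-> [H1 H2]]]]]. simpl.
  assert (beta d <= beta j) by (apply beta_antitone; lia).
  assert (0 < beta d) by (apply beta_pos; lia).
  assert (Rpower (INR K) (- sigma d) <= Rpower (INR k) (- sigma j)).
  { unfold Rpower. apply exp_le_compat.
    assert (sigma j <= sigma d) by (apply sigma_monotone; lia).
    assert (1 < sigma j) by (apply sigma_gt_1; lia).
    assert (0 <= ln (INR k)) by (apply ln_INR_nonneg; lia).
    assert (ln (INR k) <= ln (INR K)) by (apply ln_le; [apply lt_0_INR; lia | apply le_INR; lia]).
    nra. }
  assert (0 < Rpower (INR K) (- sigma d)) by apply Rpower_pos. nra.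
Qed.

Lemma total_eq d : T d = sumj alpha d + 2 * sumj (fun j => beta j * zeta (sigma j)) d.
Proof. reflexivity. Qed.

Lemma total_ge d : sumj alpha d + 2 * sumj beta d <= T d.
Proof.
  rewrite total_eq. enough (sumj beta d <= sumj (fun j => beta j * zeta (sigma j)) d) by lra.
  apply sumj_le. intros j Hj.
  assert (1 <= zeta (sigma j)) by (apply zeta_ge_1, sigma_gt_1; lia).
  assert (0 < beta j) by (apply beta_pos; lia). nra.
Qed.

Lemma total_ge_beta_1 d : (1 <= d)%nat -> 2 * beta 1%nat <= T d.
Proof. intros Hd. generalize (total_ge d) (sum_alpha_nonneg d) (beta_1_le_sum_beta d Hd). lra. Qed.

Lemma total_pos d : (1 <= d)%nat -> 0 < T d.
Proof. intros Hd. generalize (total_ge_beta_1 d Hd) (beta_pos 1 (le_n _)). lra. Qed.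

Lemma total_le d : T d <= (c + 2 * (sigma 1%nat / (sigma 1%nat - 1))) * sumj beta d.
Proof.
  rewrite total_eq.
  enough (sumj (fun j => beta j * zeta (sigma j)) d
          <= sigma 1%nat / (sigma 1%nat - 1) * sumj beta d) by (generalize (sum_alpha_le d); lra).
  rewrite <- sumj_mult_l. apply sumj_le. intros j Hj.
  assert (zeta (sigma j) <= sigma 1%nat / (sigma 1%nat - 1)).
  { apply Rle_trans with (zeta (sigma 1%nat)); [|apply zeta_converges; auto].
    apply zeta_antitone; auto. apply sigma_1_le; lia. }
  assert (0 < beta j) by (apply beta_pos; lia). nra.
Qed.

Lemma lsum_eig_box d K :
  lsum (eigv d) (box d K) = 2 * sumj (fun j => beta j * zeta_partial (sigma j) K) d.
Proof.
  rewrite lsum_box, <- sumj_mult_l. apply sumj_ext. intros j Hj. simpl.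
  unfold zeta_partial. rewrite <- !sumj_mult_l. apply sumj_ext. intros. ring.
Qed.

Lemma subset_sum_le_total d S :
  NoDup S -> List.Forall (valid_idx d) S -> subset_sum alpha beta sigma d S <= T d.
Proof.
  intros HN HV.
  assert (HK : exists K, forall j k b, In (Some (j, k, b)) S -> (k <= K)%nat).
  { clear HN HV. induction S as [|[[[j0 k0] b0]|] S [K HK]].
    - exists O. simpl; tauto.
    - exists (Nat.max k0 K). intros j k b [E|Hin]; [inversion E; lia | specialize (HK _ _ _ Hin); lia].
    - exists K. intros j k b [E|Hin]; [discriminate | eauto]. }
  destruct HK as [K HK]. rewrite List.Forall_forall in HV.
  apply Rle_trans with (lsum (eigv d) (None :: box d K)).
  - apply lsum_incl; auto.
    + intros x Hx. destruct x as [[[j k] b]|]; [right | left; auto].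
      apply In_box. specialize (HV _ Hx). specialize (HK _ _ _ Hx). simpl in HV.
      exists j, k, b. repeat split; auto; lia.
    + intros x [<-|Hx]; apply eig_nonneg; [exact I|].
      apply In_box in Hx. destruct Hx as [j [k [b [-> [H1 H2]]]]]. simpl. lia.
  - simpl. rewrite lsum_eig_box, total_eq.
    enough (sumj (fun j => beta j * zeta_partial (sigma j) K) d
            <= sumj (fun j => beta j * zeta (sigma j)) d) by lra.
    apply sumj_le. intros j Hj. apply Rmult_le_compat_l; [apply Rlt_le, beta_pos; lia|].
    apply zeta_partial_le_zeta, sigma_gt_1. lia.
Qed.

Lemma top_sum_spec d n :
  (forall S, NoDup S -> List.Forall (valid_idx d) S -> (length S <= n)%nat ->
     subset_sum alpha beta sigma d S <= top d n) /\
  (forall M, (forall S, NoDup S -> List.Forall (valid_idx d) S -> (length S <= n)%nat ->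
     subset_sum alpha beta sigma d S <= M) -> top d n <= M).
Proof.
  unfold top_sum. match goal with |- context [Lub_Rbar ?E] =>
    destruct (Lub_Rbar_real_spec E 0 (T d)) as [Hub Hlub] end.
  - exists nil. repeat split; auto using NoDup_nil; simpl; lia.
  - intros x [S [HN [HV [HL ->]]]]. apply subset_sum_le_total; auto.
  - split.
    + intros S HN HV HL. apply Hub. exists S; auto.
    + intros M HM. apply Hlub. intros x [S [HN [HV [HL ->]]]]. auto.
Qed.

Lemma top_sum_le_total d n : top d n <= T d.
Proof. apply top_sum_spec. intros; apply subset_sum_le_total; auto. Qed.

Lemma top_sum_0 d : top d 0 = 0.
Proof.
  apply Rle_antisym.
  - apply top_sum_spec. intros [|x S] _ _ HL; simpl in *; [lra | lia].
  - change 0 with (subset_sum alpha beta sigma d nil). apply top_sum_spec; auto using NoDup_nil.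
Qed.

Lemma err_le_iff d n eps : (1 <= d)%nat -> 0 < eps ->
  err alpha beta sigma d n <= eps * err alpha beta sigma d 0 <-> e2 d n <= eps ^ 2 * T d.
Proof.
  intros Hd He. unfold err. unfold err2 at 2. rewrite top_sum_0, Rminus_0_r.
  assert (HT := total_pos d Hd).
  assert (He2 : 0 <= e2 d n) by (unfold err2; generalize (top_sum_le_total d n); lra).
  replace (eps * sqrt (T d)) with (sqrt (eps ^ 2 * T d))
    by (rewrite sqrt_mult, sqrt_pow2 by (try apply pow2_ge_0; lra); reflexivity).
  split; [apply sqrt_le_0 | apply sqrt_le_1_alt]; auto.
  apply Rmult_le_pos; [apply pow2_ge_0 | lra].
Qed.

Lemma top_sum_le_deficit d n B m :
  NoDup B -> List.Forall (valid_idx d) B -> (forall x, In x B -> m <= eigv d x) -> 0 <= m ->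
  top d n <= T d - (INR (length B) - INR n) * m.
Proof.
  intros HNB HVB HmB Hm. apply top_sum_spec. intros S HN HV HL.
  set (P := fun x => if in_dec eig_idx_eq_dec x S then false else true).
  set (F := filter P B).
  assert (HSF : lsum (eigv d) S + lsum (eigv d) F <= T d).
  { rewrite <- lsum_app. apply subset_sum_le_total.
    - apply NoDup_app; [exact HN | apply NoDup_filter, HNB |].
      intros x Hx HxF. apply filter_In in HxF. unfold P in HxF.
      destruct (in_dec eig_idx_eq_dec x S); [now destruct HxF | contradiction].
    - apply List.Forall_app. split; auto. rewrite List.Forall_forall in *.
      intros x Hx. apply filter_In in Hx. apply HVB. tauto. }
  assert (HFm : INR (length F) * m <= lsum (eigv d) F).
  { apply lsum_ge_length. intros x Hx. apply filter_In in Hx. apply HmB. tauto. }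
  assert (HG : (length (filter (fun x => negb (P x)) B) <= length S)%nat).
  { apply NoDup_incl_length; [apply NoDup_filter; auto|].
    intros x Hx. apply filter_In in Hx. destruct Hx as [_ Hp]. unfold P in Hp.
    destruct (in_dec eig_idx_eq_dec x S); [auto | discriminate]. }
  assert (HFG := filter_length P B). fold F in HFG.
  assert (INR (length B) - INR n <= INR (length F)).
  { rewrite <- HFG, plus_INR. apply le_INR in HG. apply le_INR in HL. lra. }
  assert ((INR (length B) - INR n) * m <= INR (length F) * m) by (apply Rmult_le_compat_r; auto).
  change (subset_sum alpha beta sigma d S) with (lsum (eigv d) S). lra.
Qed.

Lemma lsum_eig_le_length d S : List.Forall (valid_idx d) S -> ~ In None S ->
  lsum (eigv d) S <= INR (length S).
Proof.
  intros HV HNone. rewrite <- (Rmult_1_r (INR _)). apply lsum_le_length.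
  rewrite List.Forall_forall in HV. intros [[[j k] b]|] Hx; [|contradiction].
  apply eig_le_1, HV; auto.
Qed.

Lemma top_sum_le_alpha d n : top d n <= sumj alpha d + INR n.
Proof.
  apply top_sum_spec. intros S HN HV HL. apply le_INR in HL.
  change (subset_sum alpha beta sigma d S) with (lsum (eigv d) S).
  destruct (in_dec eig_idx_eq_dec None S) as [Hin|Hnin].
  - destruct (in_split _ _ Hin) as [S1 [S2 ->]]. apply NoDup_remove_2 in HN.
    assert (HV' : List.Forall (valid_idx d) (S1 ++ S2)).
    { rewrite List.Forall_forall in *. intros x Hx. apply HV.
      apply in_app_iff in Hx. apply in_app_iff. simpl. tauto. }
    assert (H := lsum_eig_le_length d _ HV' HN).
    rewrite lsum_app in *. rewrite length_app in *. simpl in HL |- *.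
    rewrite Nat.add_succ_r, S_INR in HL. lra.
  - generalize (lsum_eig_le_length d S HV Hnin) (sum_alpha_nonneg d). lra.
Qed.

Lemma is_nNOR_err2 d eps n : (1 <= d)%nat -> 0 < eps ->
  is_nNOR alpha beta sigma d eps n -> e2 d n <= eps ^ 2 * T d.
Proof. intros Hd He [Hn _]. apply err_le_iff; auto. Qed.

Lemma is_nNOR_pos d eps n : (1 <= d)%nat -> 0 < eps < 1 ->
  is_nNOR alpha beta sigma d eps n -> (1 <= n)%nat.
Proof.
  intros Hd He Hn. destruct n; [exfalso | lia].
  assert (E := is_nNOR_err2 d eps 0 Hd (proj1 He) Hn).
  unfold err2 in E. rewrite top_sum_0 in E.
  assert (HT := total_pos d Hd). assert (eps ^ 2 < 1) by (simpl; nra). nra.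
Qed.

Lemma is_nNOR_box_bound d eps n K : (1 <= d)%nat -> 0 < eps ->
  is_nNOR alpha beta sigma d eps n ->
  (2 * INR d * INR K - INR n) * (beta d * Rpower (INR K) (- sigma d)) <= eps ^ 2 * T d.
Proof.
  intros Hd He Hn.
  assert (E := is_nNOR_err2 d eps n Hd He Hn). unfold err2 in E.
  assert (H := top_sum_le_deficit d n (box d K) _ (NoDup_box d K) (valid_box d K)
                 (eig_box_ge d K)).
  rewrite length_box, !mult_INR in H. simpl (INR 2) in H.
  enough (0 <= beta d * Rpower (INR K) (- sigma d)) by (specialize (H ltac:(auto)); lra).
  apply Rmult_le_pos; [apply Rlt_le, beta_pos; auto | apply Rlt_le, Rpower_pos].
Qed.

Lemma SPT_with_constant_pos p C :
  (forall d eps, (1 <= d)%nat -> 0 < eps < 1 ->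
     exists n, is_nNOR alpha beta sigma d eps n /\ INR n <= C * Rpower eps (- p)) -> 0 < C.
Proof.
  intros Hall. destruct (Hall 1%nat (/ 2) (le_n _) ltac:(lra)) as [n [Hn HnC]].
  assert (Hn1 := is_nNOR_pos 1 (/ 2) n (le_n _) ltac:(lra) Hn). apply (le_INR 1) in Hn1.
  assert (0 < Rpower (/ 2) (- p)) by apply Rpower_pos.
  destruct (Rle_or_lt C 0); auto. assert (C * Rpower (/ 2) (- p) <= 0) by nra. simpl in Hn1. lra.
Qed.

Lemma SPT_with_sigma_bound p : SPT_with alpha beta sigma p -> 2 <= p * (sigma 1%nat - 1).
Proof.
  intros [Hp [C [HC Hall]]]. assert (HC0 := SPT_with_constant_pos p C Hall).
  set (s1 := sigma 1%nat).
  apply (Rpower_exponent_le_of_bound (beta 1%nat * Rpower C (1 - s1)) (T 1)).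
  { apply Rmult_lt_0_compat; [apply beta_pos; lia | apply Rpower_pos]. }
  intros eps He. destruct (Hall 1%nat eps (le_n _) He) as [n [Hn HnC]].
  assert (Hn1 := is_nNOR_pos 1 eps n (le_n _) He Hn). apply (le_INR 1) in Hn1. simpl in Hn1.
  assert (Hbox := is_nNOR_box_bound 1 eps n n (le_n _) (proj1 He) Hn).
  replace (2 * INR 1 * INR n - INR n) with (INR n) in Hbox by (simpl; ring).
  assert (Hpow : INR n * Rpower (INR n) (- s1) = Rpower (INR n) (1 - s1)).
  { replace (1 - s1) with (1 + - s1) by ring. rewrite Rpower_plus, Rpower_1 by lra. reflexivity. }
  assert (Hmono : Rpower (C * Rpower eps (- p)) (1 - s1) <= Rpower (INR n) (1 - s1)).
  { apply Rpower_le_compat_nonpos; [split; [lra | exact HnC] | unfold s1; lra]. }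
  rewrite <- Rpower_mult_distr, Rpower_mult in Hmono by (auto; apply Rpower_pos).
  replace (- p * (1 - s1)) with (p * (s1 - 1)) in Hmono by ring.
  replace (Rpower eps 2) with (eps ^ 2) by (rewrite <- Rpower_pow by lra; f_equal; simpl; ring).
  assert (0 < beta 1%nat) by (apply beta_pos; lia). fold s1 in Hbox. nra.
Qed.

(* Accuracy 1/(2+c) already forces n >= sum_j beta_j, since alpha_j <= c beta_j. *)
Lemma SPT_with_total_bounded p : SPT_with alpha beta sigma p ->
  exists K, forall d, (1 <= d)%nat -> T d <= K.
Proof.
  intros [Hp [C [HC Hall]]].
  set (eps := / (2 + c)).
  assert (He : 0 < eps < 1).
  { unfold eps. split; [apply Rinv_0_lt_compat; lra|].
    rewrite <- Rinv_1. apply Rinv_lt_contravar; lra. }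
  exists ((c + 2 * (sigma 1%nat / (sigma 1%nat - 1))) * (C * Rpower eps (- p))).
  intros d Hd. eapply Rle_trans; [apply total_le|].
  apply Rmult_le_compat_l.
  { assert (0 < sigma 1%nat / (sigma 1%nat - 1)) by (apply Rdiv_lt_0_compat; lra). lra. }
  destruct (Hall d eps Hd He) as [n [Hn HnC]]. eapply Rle_trans; [|exact HnC].
  assert (E := is_nNOR_err2 d eps n Hd (proj1 He) Hn). unfold err2 in E.
  assert (HA := top_sum_le_alpha d n).
  assert (HT := total_ge d).
  assert (Hac := sum_alpha_le d).
  assert (Ha0 := sum_alpha_nonneg d).
  assert (Hb0 : 0 <= sumj beta d) by (generalize (beta_1_le_sum_beta d Hd) (beta_pos 1 (le_n _)); lra).
  assert (Heps : eps ^ 2 * (2 + c) <= 1 / 2).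
  { unfold eps. simpl. rewrite Rmult_1_r.
    replace (/ (2 + c) * / (2 + c) * (2 + c)) with (/ (2 + c)) by (field; lra).
    apply (Rmult_le_reg_l (2 + c)); [lra|]. rewrite Rinv_r; lra. }
  set (e := eps ^ 2) in *. assert (0 < e) by (unfold e; simpl; nra). assert (e <= 1 / 4) by nra.
  assert ((1 - e) * (sumj alpha d + 2 * sumj beta d) <= (1 - e) * T d)
    by (apply Rmult_le_compat_l; lra).
  assert (e * sumj alpha d <= e * (c * sumj beta d)) by (apply Rmult_le_compat_l; lra).
  nra.
Qed.

Lemma SPT_with_beta_log_decay p : SPT_with alpha beta sigma p -> 0 < p ->
  exists K D, forall d, (1 <= d)%nat -> D < INR d ->
    ln (beta d) <= K - (1 + 2 / p) * ln (INR d).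
Proof.
  intros Hspt Hp. destruct (SPT_with_total_bounded p Hspt) as [K HK].
  destruct Hspt as [_ [C [_ Hall]]]. assert (HC := SPT_with_constant_pos p C Hall).
  assert (HK0 : 0 < K) by (generalize (HK 1%nat (le_n _)) (total_pos 1 (le_n _)); lra).
  exists (ln K + 2 / p * ln C), C. intros d Hd HCd.
  assert (Hd0 : 0 < INR d) by lra.
  assert (HlnC : ln C < ln (INR d)) by (apply ln_increasing; auto).
  set (eps := exp ((ln C - ln (INR d)) / p)).
  assert (He : 0 < eps < 1).
  { split; [apply exp_pos|]. unfold eps. rewrite <- exp_0. apply exp_increasing.
    assert (0 < (ln (INR d) - ln C) / p) by (apply Rdiv_lt_0_compat; lra).
    replace ((ln C - ln (INR d)) / p) with (- ((ln (INR d) - ln C) / p)) by (field; lra). lra. }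
  destruct (Hall d eps Hd He) as [n [Hn HnC]].
  assert (Hnd : INR n <= INR d).
  { replace (C * Rpower eps (- p)) with (INR d) in HnC; auto.
    unfold Rpower, eps. rewrite ln_exp.
    replace (- p * ((ln C - ln (INR d)) / p)) with (ln (INR d) + - ln C) by (field; lra).
    rewrite exp_plus, exp_Ropp, !exp_ln by lra. field. lra. }
  assert (Hbox := is_nNOR_box_bound d eps n 1 Hd (proj1 He) Hn).
  simpl (INR 1) in Hbox. rewrite Rpower_1_l, Rmult_1_r in Hbox.
  assert (Hb : 0 < beta d) by (apply beta_pos; auto).
  assert (Hdb : INR d * beta d <= eps ^ 2 * K).
  { assert (eps ^ 2 * T d <= eps ^ 2 * K) by (apply Rmult_le_compat_l; [apply pow2_ge_0 | auto]).
    assert (INR d * beta d <= (2 * INR d * 1 - INR n) * beta d) by (apply Rmult_le_compat_r; lra).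
    lra. }
  apply ln_le in Hdb; [|apply Rmult_lt_0_compat; auto].
  rewrite !ln_mult, ln_pow in Hdb by (try apply pow_lt; unfold eps; try apply exp_pos; lra).
  unfold eps in Hdb. rewrite ln_exp in Hdb. replace (INR 2) with 2 in Hdb by reflexivity.
  replace (2 * ((ln C - ln (INR d)) / p)) with (2 / p * ln C - 2 / p * ln (INR d)) in Hdb
    by (field; lra).
  lra.
Qed.

Lemma Astar_ge_of_log_decay A K D :
  (forall d, (1 <= d)%nat -> D < INR d -> ln (beta d) <= K - A * ln (INR d)) ->
  Rbar_le A (Astar beta).
Proof.
  intros Hdecay. apply LimInf_seq_ge. intros e He.
  destruct (INR_unbounded (Rmax (Rmax D 1) (exp (Rabs K / e)))) as [N HN].
  exists N. intros n Hn. apply le_INR in Hn.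
  assert (Hbound := Rmax_l (Rmax D 1) (exp (Rabs K / e))).
  assert (Hexp := Rmax_r (Rmax D 1) (exp (Rabs K / e))).
  assert (HDn : D < INR n) by (generalize (Rmax_l D 1); lra).
  assert (Hn1 : 1 < INR n) by (generalize (Rmax_r D 1); lra).
  assert (Hn1' : (1 <= n)%nat) by (destruct n; [simpl in Hn1; lra | lia]).
  assert (Hln0 : 0 < ln (INR n)) by (rewrite <- ln_1; apply ln_increasing; lra).
  assert (HKe : Rabs K <= e * ln (INR n)).
  { assert (Rabs K / e <= ln (INR n)).
    { rewrite <- (ln_exp (Rabs K / e)). apply ln_le; [apply exp_pos | lra]. }
    apply (Rmult_le_compat_l e) in H; [|lra].
    replace (e * (Rabs K / e)) with (Rabs K) in H by (field; lra). exact H. }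
  assert (Hb := Hdecay n Hn1' HDn).
  assert (Hbn : 0 < beta n) by (apply beta_pos; auto).
  unfold Rdiv. rewrite Rmult_1_l, ln_Rinv by auto.
  apply (Rmult_le_reg_r (ln (INR n))); auto.
  rewrite Rmult_assoc, Rinv_l, Rmult_1_r by lra.
  generalize (Rle_abs K). nra.
Qed.

Lemma SPT_with_Astar_ge p : SPT_with alpha beta sigma p -> 0 < p ->
  Rbar_le (1 + 2 / p) (Astar beta).
Proof.
  intros Hspt Hp. destruct (SPT_with_beta_log_decay p Hspt Hp) as [K [D HKD]].
  exact (Astar_ge_of_log_decay _ K D HKD).
Qed.

Lemma beta_le_of_Astar_gt (A : R) : Rbar_lt A (Astar beta) ->
  exists N, forall d, (N <= d)%nat -> (2 <= d)%nat -> beta d <= Rpower (INR d) (- A).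
Proof.
  intros HA. destruct (LimInf_seq_gt _ A HA) as [N HN].
  exists N. intros d Hd Hd2. specialize (HN d Hd).
  assert (Hb : 0 < beta d) by (apply beta_pos; lia).
  assert (Hln : 0 < ln (INR d)).
  { rewrite <- ln_1. apply ln_increasing; [lra|]. apply (lt_INR 1); lia. }
  unfold Rdiv in HN. rewrite Rmult_1_l, ln_Rinv in HN by auto.
  apply (Rmult_lt_compat_r (ln (INR d))) in HN; auto.
  rewrite Rmult_assoc, Rinv_l, Rmult_1_r in HN by lra.
  rewrite <- (exp_ln (beta d)) by auto. apply exp_le_compat. lra.
Qed.

Lemma sum_beta_pow_bounded r A N : 0 < r -> 1 < r * A ->
  (forall d, (N <= d)%nat -> (2 <= d)%nat -> beta d <= Rpower (INR d) (- A)) ->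
  exists B, forall d, sumj (fun j => Rpower (beta j) r) d <= B.
Proof.
  intros Hr HrA Hdecay. exists (INR (Nat.max N 2) + r * A / (r * A - 1)). intros d.
  eapply Rle_trans; [apply (sumj_le_prefix _ (fun j => Rpower (INR j) (- (r * A))) (Nat.max N 2))|].
  - intros j Hj. split; [apply Rlt_le, Rpower_pos|].
    apply Rpower_le_1_nonneg; [split; [apply beta_pos | apply beta_le_1]; auto | lra].
  - intros j Hj. replace (- (r * A)) with (- A * r) by ring. rewrite <- Rpower_mult.
    apply Rle_Rpower_l; [lra|]. split; [apply beta_pos; lia | apply Hdecay; lia].
  - intros; apply Rlt_le, Rpower_pos.
  - generalize (zeta_partial_le (r * A) d HrA). unfold zeta_partial. lra.
Qed.

Definition eig_pow_sum (r : R) (d : nat) : R :=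
  2 * sumj (fun j => Rpower (beta j) r * zeta (r * sigma j)) d.

Lemma eig_pow_sum_bounded r B : 1 < r * sigma 1%nat ->
  (forall d, sumj (fun j => Rpower (beta j) r) d <= B) ->
  forall d, eig_pow_sum r d <= 2 * (r * sigma 1%nat / (r * sigma 1%nat - 1)) * B.
Proof.
  intros Hrs HB d. unfold eig_pow_sum.
  rewrite Rmult_assoc. apply Rmult_le_compat_l; [lra|].
  eapply Rle_trans; [|apply Rmult_le_compat_l; [|apply HB]].
  2: { apply Rlt_le, Rdiv_lt_0_compat; lra. }
  rewrite <- sumj_mult_l. apply sumj_le. intros j Hj. rewrite Rmult_comm.
  apply Rmult_le_compat_r; [apply Rlt_le, Rpower_pos|].
  eapply Rle_trans; [|apply zeta_converges; auto].
  apply zeta_antitone; auto.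
  assert (sigma 1%nat <= sigma j) by (apply sigma_1_le; lia). nra.
Qed.

(* Every term beyond K lies below t, so x <= t^(1-r) x^r applies termwise. *)
Lemma zeta_tail_threshold j r t K : (1 <= j)%nat -> r <= 1 -> 0 < t -> 1 < r * sigma 1%nat ->
  (0 < K)%nat -> / INR K < t ->
  beta j * (zeta (sigma j) - zeta_partial (sigma j) K)
  <= Rpower t (1 - r) * (Rpower (beta j) r * (zeta (r * sigma j) - zeta_partial (r * sigma j) K)).
Proof.
  intros Hj Hr Ht Hrs HK HKt.
  assert (Hb : 0 < beta j) by (apply beta_pos; auto).
  assert (Hb1 : beta j <= 1) by (apply beta_le_1; auto).
  assert (Hsj : 1 <= sigma j) by (generalize (sigma_gt_1 j Hj); lra).
  assert (Hrsj : 1 < r * sigma j).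
  { assert (sigma 1%nat <= sigma j) by (apply sigma_1_le; auto).
    assert (0 < r) by (destruct (Rle_or_lt r 0); [nra | auto]). nra. }
  set (c1 := Rpower t (1 - r) * Rpower (beta j) r).
  assert (Htail := Series_tail_le (fun k => beta j * zeta_term (sigma j) k)
                     (fun k => c1 * zeta_term (r * sigma j) k) K HK).
  rewrite !Series_scal_l, !sum_n_Rmult_l in Htail.
  destruct K as [|K]; [lia|]. simpl pred in Htail. rewrite !sum_n_zeta_term in Htail.
  unfold zeta. unfold c1 in Htail. rewrite <- Rmult_assoc, !Rmult_minus_distr_l. apply Htail.
  - intros k. apply Rmult_le_pos; [lra | apply Rlt_le, zeta_term_pos].
  - apply (@ex_series_scal_l R_AbsRing R_NormedModule), zeta_converges; auto.
  - intros k Hk.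
    assert (Hk1 : 1 <= INR (S k)) by (apply (le_INR 1); lia).
    assert (Hterm : beta j * zeta_term (sigma j) k <= t).
    { assert (zeta_term (sigma j) k <= / INR (S k)).
      { unfold zeta_term. rewrite <- (Rpower_1 (INR (S k))) at 2 by lra.
        rewrite <- Rpower_Ropp. apply Rle_Rpower; lra. }
      assert (/ INR (S k) <= / INR (S K)).
      { apply Rinv_le_contravar; [apply lt_0_INR; lia | apply le_INR; lia]. }
      assert (0 < zeta_term (sigma j) k) by apply zeta_term_pos. nra. }
    eapply Rle_trans.
    { apply (Rpower_le_threshold t _ r); [split; [|exact Hterm] | exact Hr].
      apply Rmult_lt_0_compat; [exact Hb | apply zeta_term_pos]. }
    assert (E : Rpower (beta j * zeta_term (sigma j) k) r
                = Rpower (beta j) r * zeta_term (r * sigma j) k).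
    { unfold zeta_term. rewrite <- Rpower_mult_distr, Rpower_mult by (auto; apply Rpower_pos).
      do 2 f_equal. ring. }
    rewrite E. right. ring.
Qed.

Lemma eig_box_pos d K x : In x (box d K) -> 0 < eigv d x.
Proof.
  intros Hx. apply In_box in Hx. destruct Hx as [j [k [b [-> [H1 H2]]]]]. simpl.
  apply Rmult_lt_0_compat; [apply beta_pos; lia | apply Rpower_pos].
Qed.

Lemma lsum_eig_pow_box r d K :
  lsum (fun x => Rpower (eigv d x) r) (box d K)
  = 2 * sumj (fun j => Rpower (beta j) r * zeta_partial (r * sigma j) K) d.
Proof.
  rewrite lsum_box, <- sumj_mult_l. apply sumj_ext. intros j Hj. simpl.
  unfold zeta_partial. rewrite <- !sumj_mult_l. apply sumj_ext. intros k Hk.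
  rewrite <- Rpower_mult_distr, Rpower_mult by (try apply beta_pos; try apply Rpower_pos; lia).
  replace (- sigma j * r) with (- (r * sigma j)) by ring. ring.
Qed.

Lemma total_split_box d K : T d = sumj alpha d + lsum (eigv d) (box d K)
  + 2 * sumj (fun j => beta j * (zeta (sigma j) - zeta_partial (sigma j) K)) d.
Proof.
  rewrite lsum_eig_box, total_eq, Rplus_assoc, <- Rmult_plus_distr_l, <- sumj_plus.
  do 2 f_equal. apply sumj_ext. intros. ring.
Qed.

Lemma eig_pow_sum_split_box r d K : eig_pow_sum r d = lsum (fun x => Rpower (eigv d x) r) (box d K)
  + 2 * sumj (fun j => Rpower (beta j) r * (zeta (r * sigma j) - zeta_partial (r * sigma j) K)) d.
Proof.
  rewrite lsum_eig_pow_box. unfold eig_pow_sum. rewrite <- Rmult_plus_distr_l, <- sumj_plus.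
  f_equal. apply sumj_ext. intros. ring.
Qed.

Lemma sum_zeta_tails_threshold d r t K : 0 < r <= 1 -> 0 < t -> 1 < r * sigma 1%nat ->
  (0 < K)%nat -> / INR K < t ->
  0 <= sumj (fun j => Rpower (beta j) r * (zeta (r * sigma j) - zeta_partial (r * sigma j) K)) d /\
  sumj (fun j => beta j * (zeta (sigma j) - zeta_partial (sigma j) K)) d
  <= Rpower t (1 - r)
     * sumj (fun j => Rpower (beta j) r * (zeta (r * sigma j) - zeta_partial (r * sigma j) K)) d.
Proof.
  intros Hr Ht Hrs HK HKt. split.
  - apply sumj_nonneg. intros j Hj. apply Rmult_le_pos; [apply Rlt_le, Rpower_pos|].
    assert (zeta_partial (r * sigma j) K <= zeta (r * sigma j)); [|lra].
    apply zeta_partial_le_zeta. assert (sigma 1%nat <= sigma j) by (apply sigma_1_le; lia). nra.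
  - rewrite <- sumj_mult_l. apply sumj_le. intros j Hj.
    apply zeta_tail_threshold; auto; lia || lra.
Qed.

Lemma threshold_list r t d : 0 < r < 1 -> 1 < r * sigma 1%nat -> 0 < t ->
  exists S, NoDup S /\ List.Forall (valid_idx d) S /\
    INR (length S) <= 1 + Rpower t (- r) * eig_pow_sum r d /\
    T d - subset_sum alpha beta sigma d S <= Rpower t (1 - r) * eig_pow_sum r d.
Proof.
  intros Hr Hrs Ht.
  destruct (archimed_cor1 t Ht) as [K [HKt HK]].
  destruct (sum_zeta_tails_threshold d r t K ltac:(lra) Ht Hrs HK HKt) as [Htails0 Htails].
  assert (Hsplit := eig_pow_sum_split_box r d K). rewrite (lsum_filter _ (fun x => Rle_b t (eigv d x))) in Hsplit.
  set (F := filter (fun x => Rle_b t (eigv d x)) (box d K)) in *.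
  set (G := filter (fun x => negb (Rle_b t (eigv d x))) (box d K)) in *.
  assert (HFr : 0 <= lsum (fun x => Rpower (eigv d x) r) F)
    by (apply lsum_nonneg; intros; apply Rlt_le, Rpower_pos).
  assert (HGr : 0 <= lsum (fun x => Rpower (eigv d x) r) G)
    by (apply lsum_nonneg; intros; apply Rlt_le, Rpower_pos).
  assert (Htr : 0 < Rpower t (1 - r)) by apply Rpower_pos.
  exists (None :: F). repeat split.
  - constructor; [|apply NoDup_filter, NoDup_box].
    intros HN. apply filter_In, proj1, In_box in HN. destruct HN as [? [? [? [? _]]]]. discriminate.
  - constructor; [exact I|]. apply Forall_forall. intros x Hx. apply filter_In in Hx.
    generalize (valid_box d K). rewrite Forall_forall. intuition.
  - simpl length. rewrite S_INR.
    assert (Hcount := length_filter_ge t r (eigv d) (box d K) Ht (Rlt_le _ _ (proj1 Hr))).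
    assert (Rpower t (- r) * lsum (fun x => Rpower (eigv d x) r) F
            <= Rpower t (- r) * eig_pow_sum r d)
      by (apply Rmult_le_compat_l; [apply Rlt_le, Rpower_pos | lra]).
    fold F in Hcount. lra.
  - change (subset_sum alpha beta sigma d (None :: F)) with (sumj alpha d + lsum (eigv d) F).
    assert (Hsmall := lsum_filter_lt t r (eigv d) (box d K) (Rlt_le _ _ (proj2 Hr)) (eig_box_pos d K)).
    fold G in Hsmall.
    rewrite (total_split_box d K), (lsum_filter _ (fun x => Rle_b t (eigv d x))). fold F G.
    rewrite Hsplit. nra.
Qed.

Lemma SPT_with_of_eig_pow_sum_bounded r M : 0 < r < 1 -> 1 < r * sigma 1%nat -> 0 < M ->
  (forall d, eig_pow_sum r d <= M) -> SPT_with alpha beta sigma (2 * r / (1 - r)).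
Proof.
  intros Hr Hrs HM HLam.
  set (p := 2 * r / (1 - r)). assert (Hp : 0 < p) by (apply Rdiv_lt_0_compat; lra).
  set (b1 := beta 1%nat). assert (Hb1 : 0 < b1) by (apply beta_pos; lia).
  set (kappa := Rpower (2 * b1 / M) (- (r / (1 - r)))).
  assert (Hkappa : 0 < kappa) by apply Rpower_pos.
  split; [lra|]. exists (1 + kappa * M). split; [nra|]. intros d eps Hd He.
  set (t := Rpower (2 * b1 / M * eps ^ 2) (/ (1 - r))).
  assert (Hq : 0 < 2 * b1 / M * eps ^ 2)
    by (apply Rmult_lt_0_compat; [apply Rdiv_lt_0_compat; lra | apply pow_lt; lra]).
  assert (Ht1 : Rpower t (1 - r) = 2 * b1 / M * eps ^ 2).
  { unfold t. rewrite Rpower_mult, Rinv_l, Rpower_1 by lra. reflexivity. }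
  assert (Htr : Rpower t (- r) = kappa * Rpower eps (- p)).
  { assert (0 < 2 * b1 / M) by (apply Rdiv_lt_0_compat; lra).
    unfold t, kappa, p, Rpower. rewrite ln_exp, <- exp_plus.
    rewrite (ln_mult (2 * b1 / M)), ln_pow by (try apply pow_lt; lra).
    f_equal. simpl (INR 2). field. lra. }
  assert (Hepsp : 1 <= Rpower eps (- p)).
  { assert (H := Rpower_ge_threshold eps 1 p ltac:(lra) ltac:(lra)). rewrite Rpower_1_l in H. lra. }
  destruct (threshold_list r t d Hr Hrs (Rpower_pos _ _)) as [S [HN [HV [Hlen Hres]]]].
  assert (Herr : err alpha beta sigma d (length S) <= eps * err alpha beta sigma d 0).
  { apply err_le_iff; [auto | lra |].
    assert (subset_sum alpha beta sigma d S <= top d (length S)) by (apply top_sum_spec; auto).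
    assert (Rpower t (1 - r) * eig_pow_sum r d <= Rpower t (1 - r) * M)
      by (apply Rmult_le_compat_l; [apply Rlt_le, Rpower_pos | auto]).
    assert (Rpower t (1 - r) * M = eps ^ 2 * (2 * b1)) by (rewrite Ht1; field; lra).
    assert (eps ^ 2 * (2 * b1) <= eps ^ 2 * T d)
      by (apply Rmult_le_compat_l; [apply pow2_ge_0 | apply total_ge_beta_1; auto]).
    unfold err2. lra. }
  destruct (is_nNOR_exists _ _ _ d eps _ Herr) as [n [Hn Hnor]].
  exists n. split; auto. apply le_INR in Hn.
  assert (Rpower t (- r) * eig_pow_sum r d <= Rpower t (- r) * M)
    by (apply Rmult_le_compat_l; [apply Rlt_le, Rpower_pos | auto]).
  rewrite Htr in *. nra.
Qed.

Lemma SPT_with_of_gt p : Rbar_lt 1 (Astar beta) ->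
  Rmax (two_over_Am1 (Astar beta)) (2 / (sigma 1%nat - 1)) < p -> SPT_with alpha beta sigma p.
Proof using All.
  intros HA1 Hmax.
  assert (HA := Rle_lt_trans _ _ _ (Rmax_l _ _) Hmax).
  assert (Hs := Rle_lt_trans _ _ _ (Rmax_r _ _) Hmax).
  assert (Hp : 0 < p) by (assert (0 < 2 / (sigma 1%nat - 1)) by (apply Rdiv_lt_0_compat; lra); lra).
  set (r := p / (p + 2)).
  assert (Hr : 0 < r < 1).
  { unfold r. split; [apply Rdiv_lt_0_compat; lra|].
    apply (Rmult_lt_reg_r (p + 2)); [lra|]. unfold Rdiv. rewrite Rmult_assoc, Rinv_l; lra. }
  assert (Ep : p = 2 * r / (1 - r)) by (unfold r; field; split; lra).
  assert (Hrs : 1 < r * sigma 1%nat).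
  { apply (Rmult_lt_compat_r (sigma 1%nat - 1)) in Hs; [|lra].
    replace (2 / (sigma 1%nat - 1) * (sigma 1%nat - 1)) with 2 in Hs by (field; lra).
    unfold r. apply (Rmult_lt_reg_r (p + 2)); [lra|].
    replace (p / (p + 2) * sigma 1%nat * (p + 2)) with (p * sigma 1%nat) by (field; lra). lra. }
  destruct (Rbar_lt_dense _ _ (two_over_Am1_lt _ p Hp HA1 HA)) as [A [HA' HAstar]].
  assert (HrA : 1 < r * A).
  { unfold r. apply (Rmult_lt_reg_r (p + 2)); [lra|].
    replace (p / (p + 2) * A * (p + 2)) with (p * A) by (field; lra).
    apply (Rmult_lt_compat_l p) in HA'; [|lra].
    replace (p * (1 + 2 / p)) with (p + 2) in HA' by (field; lra). lra. }
  destruct (beta_le_of_Astar_gt A HAstar) as [N HN].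
  destruct (sum_beta_pow_bounded r A N (proj1 Hr) HrA HN) as [B HB].
  assert (HB0 : 0 < B) by (generalize (HB 1%nat); simpl;
                           generalize (Rpower_pos (beta 1%nat) r); lra).
  rewrite Ep. apply (SPT_with_of_eig_pow_sum_bounded r (2 * (r * sigma 1%nat / (r * sigma 1%nat - 1)) * B));
    auto using eig_pow_sum_bounded.
  assert (0 < r * sigma 1%nat / (r * sigma 1%nat - 1)) by (apply Rdiv_lt_0_compat; lra). nra.
Qed.

Lemma SPT_with_ge p : SPT_with alpha beta sigma p ->
  Rbar_lt 1 (Astar beta) /\ Rmax (two_over_Am1 (Astar beta)) (2 / (sigma 1%nat - 1)) <= p.
Proof using All.
  intros Hspt.
  assert (Hs : 2 / (sigma 1%nat - 1) <= p).
  { apply (Rmult_le_reg_r (sigma 1%nat - 1)); [lra|].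
    replace (2 / (sigma 1%nat - 1) * (sigma 1%nat - 1)) with 2 by (field; lra).
    apply SPT_with_sigma_bound; auto. }
  assert (Hp : 0 < p) by (assert (0 < 2 / (sigma 1%nat - 1)) by (apply Rdiv_lt_0_compat; lra); lra).
  destruct (two_over_Am1_le _ p Hp (SPT_with_Astar_ge p Hspt Hp)) as [HA1 HA].
  split; [exact HA1 | apply Rmax_lub; auto].
Qed.

End Model.

Theorem theorem2p2 (alpha beta sigma : nat -> R) (c : R) :
  (forall j, (1 <= j)%nat -> 0 <= alpha j) ->
  beta 1%nat <= 1 ->
  (forall j, (1 <= j)%nat -> beta (S j) <= beta j) ->
  (forall j, (1 <= j)%nat -> 0 < beta j) ->
  1 < sigma 1%nat ->
  (forall j, (1 <= j)%nat -> sigma j <= sigma (S j)) ->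
  0 < c ->
  (forall j, (1 <= j)%nat -> alpha j <= c * beta j) ->
  (SPT alpha beta sigma <-> Rbar_lt 1 (Astar beta)) /\
  (Rbar_lt 1 (Astar beta) ->
     is_inf (SPT_with alpha beta sigma)
       (Rmax (two_over_Am1 (Astar beta)) (2 / (sigma 1%nat - 1)))).
Proof.
  intros h1 h2 h3 h4 h5 h6 h7 h8.
  pose proof (SPT_with_ge alpha beta sigma c h1 h2 h3 h4 h5 h6 h7 h8) as Hlower.
  pose proof (SPT_with_of_gt alpha beta sigma c h1 h2 h3 h4 h5 h6 h7 h8) as Hupper.
  set (m := Rmax (two_over_Am1 (Astar beta)) (2 / (sigma 1%nat - 1))) in *.
  split; [split|].
  - intros [p Hp]. apply (Hlower p Hp).
  - intros HA. exists (m + 1). apply Hupper; auto. lra.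
  - intros HA. split.
    + intros p Hp. apply (Hlower p Hp).
    + intros y Hy. destruct (Rle_or_lt y m) as [|Hym]; auto.
      assert (Hmid : SPT_with alpha beta sigma ((y + m) / 2)) by (apply Hupper; auto; lra).
      specialize (Hy _ Hmid). lra.
Qed.
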